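(* If $X$ is a non-scattered Tychonoff space, then its Stone–Čech compactification $\beta X$ is not a $\Delta$-space.
   Context: A space is scattered if every nonempty subset has a point isolated in that subset. A topological space $X$ is a $\Delta$-space if for every decreasing sequence $\{D_n:n\in\omega\}$ of subsets of $X$ with $\bigcap_n D_n=\emptyset$ there is a decreasing sequence $\{V_n:n\in\omega\}$ of open subsets of $X$ with $D_n\subseteq V_n$ for all $n$ and $\bigcap_n V_n=\emptyset$. *)

From HB Require Import structures.
From mathcomp Require Import all_boot all_order all_algebra.
From mathcomp Require Import all_classical all_reals all_analysis.
From mathcomp Require Import Rstruct Rstruct_topology.
From Stdlib Require Import Rdefinitions.

Set Implicit Arguments.
Unset Strict Implicit.
Unset Printing Implicit Defensive.

Import Order.TTheory GRing.Theory Num.Theory.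
Local Open Scope classical_set_scope.

Definition scattered (X : topologicalType) : Prop :=
  forall A : set X, A !=set0 -> exists x, isolated A x.

Definition tychonoff_space (X : topologicalType) : Prop :=
  accessible_space X /\
  forall (x : X) (B : set X), closed B -> ~ B x ->
    exists f : X -> R, [/\ continuous f, f x = 0%R & forall y, B y -> f y = 1%R].

Definition delta_space (X : topologicalType) : Prop :=
  forall D : nat -> set X,
    (forall n, D n.+1 `<=` D n) ->
    \bigcap_n D n = set0 ->
    exists V : nat -> set X,
      [/\ forall n, open (V n),
          forall n, V n.+1 `<=` V n,
          forall n, D n `<=` V n &
          \bigcap_n V n = set0].

Definition embedding (X K : topologicalType) (e : X -> K) : Prop :=
  [/\ injective e, continuous e &
      forall U : set X, open U -> exists W : set K, open W /\ e @^-1` W = U].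

(* This characterizes beta X
   up to homeomorphism. *)
Definition stone_cech (X K : topologicalType) (e : X -> K) : Prop :=
  [/\ compact [set: K], hausdorff_space K, embedding e, dense (range e) &
      forall (Y : topologicalType), compact [set: Y] -> hausdorff_space Y ->
        forall f : X -> Y, continuous f ->
          exists g : K -> Y, continuous g /\ forall x, g (e x) = f x].

From HB Require Import structures.
From mathcomp Require Import all_boot all_order all_algebra.
From mathcomp Require Import all_classical all_reals all_analysis.

Set Implicit Arguments.
Unset Strict Implicit.
Unset Printing Implicit Defensive.
Local Open Scope classical_set_scope.

(* Splitting open sets that meet A into two open pieces with disjoint
   closures yields a Cantor scheme W : seq bool -> set K of nonempty closed
   sets, shrinking when a letter is consed and disjoint for sibling words.
   In any compact space such a scheme defeats the Delta property: the limit
   sets L t of the branches 0^k 1 t (k -> oo) are pairwise disjoint, so the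
   levels D n = \bigcup_{|t| >= n} L t decrease to the empty set.  Given
   open V n covering D n, compactness lets us choose, level after level,
   words S (n+1) = 0^k 1 S n with W (S (n+1)) inside V n; a point in the
   (nonempty, by Cantor's intersection theorem) intersection of the nested
   closed sets W (S n) would then lie in every V n, a contradiction. *)

Definition crowded {T : topologicalType} (A : set T) : Prop :=
  forall x, ~ isolated A x.

Lemma not_scattered_crowded (X : topologicalType) :
  ~ scattered X -> exists A : set X, A !=set0 /\ crowded A.
Proof.
move=> nS; apply: contrapT => noA; apply: nS => A A0.
apply: contrapT => noiso; apply: noA; exists A; split => // x isox.
by apply: noiso; exists x.
Qed.

Lemma crowded_image (X K : topologicalType) (e : X -> K) (A : set X) :
  injective e -> continuous e -> crowded A -> crowded (e @` A).
Proof.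
move=> inj_e cont_e crA y [/set_mem [a Aa <-] [V nV VA]].
apply: (crA a); split; first by rewrite inE.
exists (e @^-1` V); first exact: cont_e a _ nV.
apply/seteqP; split => [z [Vz Az]|z ->]; last first.
  by have : [set e a] (e a) by []; rewrite -VA => -[].
have : [set e a] (e z) by rewrite -VA; split => //; exists z.
by move=> /inj_e.
Qed.

Lemma nonincreasing_sets (T : Type) (W : nat -> set T) :
  (forall n, W n.+1 `<=` W n) -> forall n m, (n <= m)%N -> W m `<=` W n.
Proof.
move=> decW n m.
apply: (homo_leq (r := fun A B => B `<=` A)) => [B|B A C AB BC|//].
- exact: subset_refl.
- exact: subset_trans BC AB.
Qed.

Lemma zeros_one_inj (k k' : nat) (t t' : seq bool) :
  nseq k false ++ true :: t = nseq k' false ++ true :: t' -> k = k' /\ t = t'.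
Proof.
elim: k k' => [|k ih] [|k'] //=; first by case.
by case=> /ih [-> ->].
Qed.

Section CompactSpace.
Variable K : topologicalType.
Hypothesis compactK : compact [set: K].

Lemma nested_closed_nonempty (W : nat -> set K) :
  (forall n, closed (W n)) -> (forall n, W n.+1 `<=` W n) ->
  (forall n, W n !=set0) -> \bigcap_n W n !=set0.
Proof.
move=> clW decW W0.
have WF : ProperFilter (filter_from [set: nat] W).
  apply: filter_from_proper => [|n _]; last exact: W0.
  apply: filter_fromT_filter; first by exists 0%N.
  move=> i j; exists (maxn i j) => x Wx.
  by split; [apply: (nonincreasing_sets decW (leq_maxl i j)) |
             apply: (nonincreasing_sets decW (leq_maxr i j))].
have [p [_ clusterp]] := compactK WF filterT.
exists p => n _; rewrite clusterE in clusterp.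
by rewrite (closure_id (W n)).1 //; apply: clusterp; exists n.
Qed.

Lemma nested_closed_eventually_in (W : nat -> set K) (V : set K) :
  (forall n, closed (W n)) -> (forall n, W n.+1 `<=` W n) -> open V ->
  \bigcap_n W n `<=` V -> exists n, W n `<=` V.
Proof.
move=> clW decW oV capV; apply: contrapT => noW.
have [|||x Zx] := @nested_closed_nonempty (fun n => W n `&` ~` V).
- by move=> n; apply: closedI => //; rewrite closedC.
- by move=> n y [Wy nVy]; split => //; apply: decW.
- move=> n; apply: contrapT => Z0; apply: noW; exists n => y Wy.
  by apply: contrapT => nVy; apply: Z0; exists y.
by apply: (Zx 0%N I).2; apply: capV => n _; apply: (Zx n I).1.
Qed.

Definition cantor_scheme (W : seq bool -> set K) : Prop :=
  [/\ forall s, closed (W s), forall s, W s !=set0,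
      forall b s, W (b :: s) `<=` W s &
      forall s, W (false :: s) `&` W (true :: s) = set0].

Section CantorSchemeNotDelta.
Variable W : seq bool -> set K.
Hypothesis schemeW : cantor_scheme W.

Lemma scheme_prefix (u s : seq bool) : W (u ++ s) `<=` W s.
Proof.
have [_ _ consW _] := schemeW.
by elim: u => [|b u ih] //= x /consW /ih.
Qed.

Lemma scheme_same_size_eq (u u' : seq bool) (x : K) :
  size u = size u' -> W u x -> W u' x -> u = u'.
Proof.
have [_ _ consW disjW] := schemeW.
elim: u u' => [|b u ih] [|b' u'] //= [sz] Wx Wx'.
have equ := ih _ sz (consW _ _ _ Wx) (consW _ _ _ Wx'); subst u'.
by case: b b' Wx Wx' => -[] // Wx Wx'; have : set0 x by rewrite -(disjW u).
Qed.

Definition limit_set (t : seq bool) : set K :=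
  \bigcap_k W (nseq k false ++ true :: t).

Lemma limit_set_inj (t t' : seq bool) (x : K) :
  limit_set t x -> limit_set t' x -> t = t'.
Proof.
move=> Lx Lx'.
have sz : size (nseq (size t') false ++ true :: t) =
          size (nseq (size t) false ++ true :: t').
  by rewrite !size_cat !size_nseq /= !addnS addnC.
by have [] := zeros_one_inj (scheme_same_size_eq sz (Lx _ I) (Lx' _ I)).
Qed.

Definition level (n : nat) : set K :=
  \bigcup_(t in [set t : seq bool | (n <= size t)%N]) limit_set t.

Lemma level_decreasing (n : nat) : level n.+1 `<=` level n.
Proof. by move=> x [t /= nt Lx]; exists t => //=; apply: ltnW. Qed.

Lemma level_bigcap : \bigcap_n level n = set0.
Proof.
apply/seteqP; split => // x levx.
have [t _ Lx] := levx 0%N I.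
have [t' /= tt' Lx'] := levx (size t).+1 I.
by move: tt'; rewrite -(limit_set_inj Lx Lx') ltnn.
Qed.

Lemma limit_set_eventually_in (t : seq bool) (V : set K) :
  open V -> limit_set t `<=` V ->
  exists k, W (nseq k false ++ true :: t) `<=` V.
Proof.
have [closedW _ consW _] := schemeW.
move=> oV LV; apply: nested_closed_eventually_in => // n; exact: consW.
Qed.

Lemma cantor_scheme_not_delta : ~ delta_space K.
Proof.
have [closedW nonemptyW _ _] := schemeW.
move=> /(_ level level_decreasing level_bigcap) [V [oV _ levV V0]].
have pick n t : exists j, (n <= size t)%N ->
    W (nseq j false ++ true :: t) `<=` V n.
  case: (leqP n (size t)) => [nt|tn]; last by exists 0%N.
  have Lt_V : limit_set t `<=` V n by move=> x Lx; apply: levV; exists t.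
  by have [j jP] := limit_set_eventually_in (oV n) Lt_V; exists j.
have [k kP] : exists k : nat -> seq bool -> nat, forall n t,
    (n <= size t)%N -> W (nseq (k n t) false ++ true :: t) `<=` V n.
  have /choice[k kP] n : exists g : seq bool -> nat, forall t, (n <= size t)%N ->
      W (nseq (g t) false ++ true :: t) `<=` V n.
    by have [g gP] := choice (pick n); exists g.
  by exists k.
pose fix S n := if n is m.+1 then nseq (k m (S m)) false ++ true :: S m else [::].
have sizeS n : (n <= size (S n))%N.
  by elim: n => //= n ih; rewrite size_cat /= addnS ltnS (leq_trans ih) ?leq_addl.
have SV n : W (S n.+1) `<=` V n by apply: kP (sizeS n).
have Sdecr n : W (S n.+1) `<=` W (S n).
  by rewrite /= -cat_rcons; apply: scheme_prefix.
have [x Sx] := nested_closed_nonempty (fun n => closedW _) Sdecr (fun n => nonemptyW _).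
have : (\bigcap_n V n) x by move=> n _; apply: SV; exact: (Sx n.+1 I).
by rewrite V0.
Qed.

End CantorSchemeNotDelta.

Hypothesis hausdorffK : hausdorff_space K.

Lemma open_closure_in_open (a : K) (U : set K) :
  open U -> U a -> exists O, [/\ open O, O a & closure O `<=` U].
Proof.
move=> oU Ua.
have [N Na NU] := @compact_regular _ a _ hausdorffK compactK (@filterT _ (nbhs a) _)
  _ (open_nbhs_nbhs (conj oU Ua)).
exists N°; split; [exact: open_interior | exact: Na |].
exact: subset_trans (closureS (@interior_subset _ N)) NU.
Qed.

Variable A : set K.
Hypothesis crowdedA : crowded A.

Lemma crowded_split (U : set K) : open U -> U `&` A !=set0 ->
  exists f : bool -> set K,
    [/\ forall b, open (f b), forall b, f b `&` A !=set0,
        forall b, closure (f b) `<=` U &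
        closure (f false) `&` closure (f true) = set0].
Proof.
move=> oU [a [Ua Aa]].
have [b [Ub Ab ba]] : exists b, [/\ U b, A b & b != a].
  apply: contrapT => nob; apply: (@crowdedA a); split; first by rewrite inE.
  exists U; first exact: open_nbhs_nbhs.
  apply/seteqP; split => [x [Ux Ax]|x -> //] /=.
  by apply: contrapT => xa; apply: nob; exists x; split => //; apply/eqP.
move: hausdorffK; rewrite open_hausdorff => /(_ a b); rewrite eq_sym => /(_ ba).
move=> [[Ga Gb]] /= [/set_mem Gaa /set_mem Gbb] [oGa oGb /eqP Gab].
have [Oa [oOa Oaa clOa]] := open_closure_in_open (openI oU oGa) (conj Ua Gaa).
have [Ob [oOb Obb clOb]] := open_closure_in_open (openI oU oGb) (conj Ub Gbb).
exists (fun c => if c then Ob else Oa); split => [[]|[]|[]|] //.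
- by exists b.
- by exists a.
- by move=> x /clOb [].
- by move=> x /clOa [].
- by apply/seteqP; split => // x [/clOa [_ ?] /clOb [_ ?]]; rewrite -Gab.
Qed.

Lemma crowded_cantor_scheme : A !=set0 -> exists W, cantor_scheme W.
Proof.
move=> [a0 Aa0].
have split_any (U : set K) : exists f : bool -> set K,
    open U /\ U `&` A !=set0 ->
    [/\ forall b, open (f b), forall b, f b `&` A !=set0,
        forall b, closure (f b) `<=` U &
        closure (f false) `&` closure (f true) = set0].
  have [[oU UA]|noU] := pselect (open U /\ U `&` A !=set0).
    by have [f fP] := crowded_split oU UA; exists f.
  by exists (fun _ => U) => /noU.
have [half halfP] := choice split_any.
pose U s := foldr (fun b V => half V b) setT s.
have U_good s : open (U s) /\ U s `&` A !=set0.
  elim: s => [|b s [oU UA]] /=; first by split; [exact: openT | exists a0].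
  by have [? ? _ _] := halfP _ (conj oU UA).
exists (closure \o U); split => [s|s|b s|s] /=.
- exact: closed_closure.
- by have [_ [x [Ux _]]] := U_good s; exists x; apply: subset_closure.
- by have [_ _ sub _] := halfP _ (U_good s); apply: subset_trans (sub b) _;
    apply: subset_closure.
- by have [] := halfP _ (U_good s).
Qed.

Lemma crowded_not_delta : A !=set0 -> ~ delta_space K.
Proof.
move=> A0; have [W schemeW] := crowded_cantor_scheme A0.
exact: cantor_scheme_not_delta schemeW.
Qed.

End CompactSpace.

Theorem corollary3p15 (X : topologicalType) :
  tychonoff_space X -> ~ scattered X ->
  forall (K : topologicalType) (e : X -> K), stone_cech e -> ~ delta_space K.
Proof.
move=> _ nonscatteredX K e [compactK hausdorffK [inj_e cont_e _] _ _].
have [A [[a Aa] crowdedA]] := not_scattered_crowded nonscatteredX.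
apply: (crowded_not_delta compactK hausdorffK (crowded_image inj_e cont_e crowdedA)).
by exists (e a), a.
Qed.
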